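(* If $x_i$ is an optimal mechanism for agent $i$ (maximizing $\mathbb E[x_i(s)]$ subject to (P) and (IC)) with indirect utility $U_i(s_i)=\mathbb E[\omega x_i(s_i,s_{-i})\mid s_i]$, then $U_i(s_i)\ge 2s_i-1$ for every type $s_i$.
   Context: Setup. A state $\omega\in\{-1,+1\}$ is drawn with probability $1/2$ each. There are $n\ge2$ agents. Conditional on $\omega$, signals are i.i.d. with distribution $\mathbb F_\omega$ on $[0,1]$, normalized so that $s_i=\mathbb P[\omega=+1\mid s_i]$; $\mathbb F_{-1},\mathbb F_{+1}$ mutually absolutely continuous with densities; $\mathbb F=(\mathbb F_{-1}+\mathbb F_{+1})/2$ has density supported on a non-singleton interval with endpoints $\underline s<\overline s$ in $[0,1]$, differentiable with continuous derivative and $|f'/f|$ bounded. A mechanism for agent $i$ is measurable $x_i:[\underline s,\overline s]^n\to[0,1]$ (probability of receiving a good worth $\omega$, else $0$). (P): $\mathbb E[\omega x_i(s_i,s_{-i})\mid s_i]\ge0$; (IC): $\mathbb E[\omega x_i(s_i,s_{-i})\mid s_i]\ge\mathbb E[\omega x_i(\hat s_i,s_{-i})\mid s_i]$, for all $s_i,\hat s_i$ in the support. *)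

From mathcomp Require Import all_boot all_order all_algebra.
From mathcomp Require Import all_classical all_reals all_analysis.
Import numFieldNormedType.Exports.
Import Order.TTheory GRing.Theory Num.Theory.
Set Implicit Arguments.
Unset Strict Implicit.
Unset Printing Implicit Defensive.
Local Open Scope ring_scope.
Local Open Scope classical_set_scope.

(* Agents are indexed by 'I_n; a signal profile is an n.-tuple of
   reals (with the product Borel sigma-algebra from mathcomp-analysis).
   gp, gm : R -> R are the densities (w.r.t. Lebesgue measure) of
   F_{+1}, F_{-1}; F = (F_{-1}+F_{+1})/2 has density dens_f gp gm.
   The support of F is the interval [lo, hi]. *)

Section Model.
Variable R : realType.

Definition dens_f (gp gm : R -> R) (t : R) : R := (gp t + gm t) / 2.

Variable n : nat.

Definition upd (s : n.-tuple R) (j : 'I_n) (t : R) : n.-tuple R :=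
  [tuple if k == j then t else tnth s k | k < n].

(* For a jointly
   measurable bounded g this is (Tonelli) the integral against the product
   measure F_w^{|js|}. *)
Fixpoint iint (lo hi : R) (w : R -> R) (g : n.-tuple R -> R)
    (js : seq 'I_n) (s : n.-tuple R) : R :=
  match js with
  | [::] => g s
  | j :: js' =>
      Rintegral (@lebesgue_measure R) `[lo, hi]
        (fun t => w t * iint lo hi w g js' (upd s j t))
  end.

Definition others (i : 'I_n) : seq 'I_n := [seq j <- enum 'I_n | j != i].

(* E[ x(r, s_{-i}) | omega ] where s_{-i} ~ F_omega^{n-1}, w the density of
   F_omega *)
Definition condE (lo hi : R) (w : R -> R) (x : n.-tuple R -> R)
    (i : 'I_n) (r : R) : R :=
  iint lo hi w x (others i) [tuple r | k < n].

(* E[ omega * x_i(r, s_{-i}) | s_i = s ]: type s reporting r.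
   P[omega = +1 | s_i = s] = s by the normalization of signals, and
   conditionally on omega the s_{-i} are i.i.d. with density gp or gm. *)
Definition interim (lo hi : R) (gp gm : R -> R) (x : n.-tuple R -> R)
    (i : 'I_n) (s r : R) : R :=
  s * condE lo hi gp x i r - (1 - s) * condE lo hi gm x i r.

Definition indirect_utility lo hi gp gm x i (s : R) : R :=
  interim lo hi gp gm x i s s.

(* objective E[x_i(s)] = 1/2 E[x_i | omega=+1] + 1/2 E[x_i | omega=-1] *)
Definition objective (lo hi : R) (gp gm : R -> R) (x : n.-tuple R -> R) : R :=
  (iint lo hi gp x (enum 'I_n) [tuple 0 | k < n]
   + iint lo hi gm x (enum 'I_n) [tuple 0 | k < n]) / 2.

Definition mechanism (x : n.-tuple R -> R) : Prop :=
  measurable_fun [set: n.-tuple R] x /\ (forall s, 0 <= x s <= 1).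

Definition participation lo hi gp gm x i : Prop :=
  forall s, lo <= s <= hi -> 0 <= interim lo hi gp gm x i s s.

Definition incentive_compatible lo hi gp gm x i : Prop :=
  forall s s', lo <= s <= hi -> lo <= s' <= hi ->
    interim lo hi gp gm x i s s' <= interim lo hi gp gm x i s s.

Definition feasible lo hi gp gm x i : Prop :=
  [/\ mechanism x, participation lo hi gp gm x i
    & incentive_compatible lo hi gp gm x i].

Definition optimal lo hi gp gm x i : Prop :=
  feasible lo hi gp gm x i /\
  forall y, feasible lo hi gp gm y i ->
    objective lo hi gp gm y <= objective lo hi gp gm x.

End Model.

Definition signal_structure (R : realType) (lo hi : R) (gp gm : R -> R) : Prop :=
  [/\ 0 <= lo /\ lo < hi /\ hi <= 1,
      [/\ measurable_fun [set: R] gp, measurable_fun [set: R] gm,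
          (forall t, 0 <= gp t) /\ (forall t, 0 <= gm t),
          (\int[@lebesgue_measure R]_t (gp t)%:E = 1)%E
        & (\int[@lebesgue_measure R]_t (gm t)%:E = 1)%E],
      (forall A : set R, measurable A ->
         (\int[@lebesgue_measure R]_(t in A) (gp t)%:E = 0)%E <->
         (\int[@lebesgue_measure R]_(t in A) (gm t)%:E = 0)%E),
      (forall t, lo < t < hi -> 0 < dens_f gp gm t) /\
      (forall t, ~ (lo <= t <= hi) -> dens_f gp gm t = 0) /\
      (* normalization s = P[omega = +1 | s] (Bayes, prior 1/2) *)
      (forall t, lo <= t <= hi -> gp t = t * (gp t + gm t))
    &
      [/\ (forall t, lo < t < hi -> derivable (dens_f gp gm) t 1),
          {in `]lo, hi[, continuous (derive1 (dens_f gp gm))}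
        & exists M : R, forall t, lo < t < hi ->
            `|(derive1 (dens_f gp gm)) t / dens_f gp gm t| <= M]].

(* Suppose some type s0 has U(s0) < 2 s0 - 1, the utility of always receiving
   the good.  Change x by allocating for sure to every type t with
   U(t) < 2t - 1: these types now get 2t - 1 > U(t), which beats any
   deviation, while the remaining types had U(t) >= 2t - 1 already, so the new
   mechanism is still feasible.  Incentive compatibility of s0 forces
   U(t) < 2t - 1 and E[x_i(t, s_{-i}) | omega = +1] < 1 on a whole interval
   (s0 - d/4, hi) with d = 2 s0 - 1 - U(s0); since F_{+1} has positive density
   there, the objective strictly increases, contradicting optimality. *)

From mathcomp Require Import all_boot all_order all_algebra.
From mathcomp Require Import all_classical all_reals all_analysis.
From mathcomp Require Import measurable_realfun.
From mathcomp Require Import ring lra.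
Import numFieldNormedType.Exports.
Import Order.TTheory GRing.Theory Num.Theory.
Set Implicit Arguments.
Unset Strict Implicit.
Unset Printing Implicit Defensive.
Local Open Scope ring_scope.
Local Open Scope classical_set_scope.

Local Notation L := (@lebesgue_measure _).

Section UpdateCoordinate.
Variables (R : realType) (n : nat).

Lemma tnth_upd (s : n.-tuple R) j t k :
  tnth (upd s j t) k = if k == j then t else tnth s k.
Proof. by rewrite /upd tnth_mktuple. Qed.

Lemma updC (s : n.-tuple R) j k t u : j != k ->
  upd (upd s j t) k u = upd (upd s k u) j t.
Proof.
move=> jk; apply: eq_from_tnth => l; rewrite !tnth_upd.
by case: (eqVneq l j) => [->|//]; rewrite (negbTE jk).
Qed.

Lemma measurable_upd_pair j :
  measurable_fun setT (fun p : n.-tuple R * R => upd p.1 j p.2).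
Proof.
apply/measurable_fun_tnthP => k /=.
rewrite (_ : _ \o _ = fun p : n.-tuple R * R => if k == j then p.2 else tnth p.1 k).
  case: (k == j); first exact: measurable_snd.
  exact: measurableT_comp (measurable_tnth k) measurable_fst.
by apply: funext => p /=; rewrite tnth_upd.
Qed.

Lemma measurable_upd (s : n.-tuple R) j : measurable_fun setT (upd s j).
Proof. exact: measurableT_comp (measurable_upd_pair j) (pair1_measurable s). Qed.

Lemma measurable_diag_tuple : measurable_fun setT (fun t : R => [tuple t | _ < n]).
Proof.
apply/measurable_fun_tnthP => k.
by rewrite (_ : _ \o _ = id) //; apply: funext => t /=; rewrite tnth_mktuple.
Qed.

End UpdateCoordinate.

Section IteratedIntegral.
Variables (R : realType) (n : nat) (w : R -> R).
Hypotheses (mw : measurable_fun setT w) (w0 : forall t, 0 <= w t)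
  (w1 : (\int[L]_t (w t)%:E = 1)%E).

(* The extended-real counterpart of [iint], integrating over the whole line:
   nonnegativity makes Tonelli available for reordering the coordinates. *)
Fixpoint eiint (g : n.-tuple R -> R) (js : seq 'I_n) (s : n.-tuple R) : \bar R :=
  match js with
  | [::] => (g s)%:E
  | j :: js' => (\int[L]_t ((w t)%:E * eiint g js' (upd s j t)))%E
  end.

Lemma eiint_cst1 js s : eiint (fun _ => 1) js s = 1%E.
Proof.
elim: js s => [//|j js IH] s /=.
by rewrite -w1; apply: eq_integral => t _; rewrite IH mule1.
Qed.

Lemma eiint_dep (g : n.-tuple R -> R) js s s' :
  (forall k, k \notin js -> tnth s k = tnth s' k) -> eiint g js s = eiint g js s'.
Proof.
elim: js s s' => [|j js IH] s s' ss' /=.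
  by congr (_%:E); congr g; apply: eq_from_tnth => k; exact: ss'.
apply: eq_integral => t _; congr (_ * _)%E; apply: IH => k kjs.
rewrite !tnth_upd; case: eqVneq => // kj; apply: ss'.
by rewrite inE negb_or kj.
Qed.

Lemma eq_eiint_slice (g h : n.-tuple R -> R) (i : 'I_n) (c : R) js s :
  (forall s, tnth s i = c -> g s = h s) -> i \notin js -> tnth s i = c ->
  eiint g js s = eiint h js s.
Proof.
move=> gh; elim: js s => [|j js IH] s /=; first by move=> _ /gh ->.
rewrite inE negb_or => /andP[ij ijs] sc.
apply: eq_integral => t _; congr (_ * _)%E; apply: IH => //.
by rewrite tnth_upd (negbTE ij).
Qed.

Section Mechanism.
Variables (g : n.-tuple R -> R) (mg : mechanism g).

Lemma eiint_mechanism js :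
  measurable_fun [set: n.-tuple R] (eiint g js) /\ forall s, (0 <= eiint g js s <= 1)%E.
Proof.
case: mg => mg01 g01; elim: js => [|j js [IHm IHb]] /=.
  by split=> [|s]; [exact/measurable_EFinP | rewrite !lee_fin].
have mF : measurable_fun setT
    (fun p : n.-tuple R * R => ((w p.2)%:E * eiint g js (upd p.1 j p.2))%E).
  apply: emeasurable_funM.
    by apply/measurable_EFinP; exact: measurableT_comp mw measurable_snd.
  exact: measurableT_comp IHm (measurable_upd_pair j).
have F0 p : (0 <= (w p.2)%:E * eiint g js (upd p.1 j p.2))%E.
  by apply: mule_ge0; [rewrite lee_fin | case/andP: (IHb (upd p.1 j p.2))].
split; first exact: (measurable_fun_fubini_tonelli_F (m2 := L) _ mF F0).
move=> s; rewrite integral_ge0 //=; last by move=> t _; exact: (F0 (s, t)).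
rewrite -w1; apply: ge0_le_integral => //.
- by move=> t _; exact: (F0 (s, t)).
- exact: measurableT_comp mF (pair1_measurable s).
- exact/measurable_EFinP.
- move=> t _; case/andP: (IHb (upd s j t)) => _ le1.
  by rewrite -[leRHS]mule1 lee_wpmul2l ?lee_fin.
Qed.

Lemma measurable_eiint js : measurable_fun [set: n.-tuple R] (eiint g js).
Proof. by case: (eiint_mechanism js). Qed.

Lemma eiint_ge0 js s : (0 <= eiint g js s)%E.
Proof. by case: (eiint_mechanism js) => _ /(_ s) /andP[]. Qed.

Lemma eiint_le1 js s : (eiint g js s <= 1)%E.
Proof. by case: (eiint_mechanism js) => _ /(_ s) /andP[]. Qed.

Lemma measurable_eiint_upd js s j : measurable_fun setT (fun t => eiint g js (upd s j t)).
Proof. exact: measurableT_comp (measurable_eiint js) (measurable_upd s j). Qed.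

Lemma eiint_swap j k js s : j != k ->
  eiint g [:: j, k & js] s = eiint g [:: k, j & js] s.
Proof.
move=> jk /=.
pose H := fun p : R * R =>
  ((w p.1)%:E * ((w p.2)%:E * eiint g js (upd (upd s j p.1) k p.2)))%E.
have mH : measurable_fun setT H.
  have mu : measurable_fun setT (fun p : R * R => upd (upd s j p.1) k p.2).
    apply: (measurableT_comp (measurable_upd_pair k)
      (g := fun p : R * R => (upd s j p.1, p.2))).
    exact: measurable_fun_pair (measurableT_comp (measurable_upd s j) _) _.
  apply: emeasurable_funM.
    by apply/measurable_EFinP; exact: measurableT_comp mw measurable_fst.
  apply: emeasurable_funM.
    by apply/measurable_EFinP; exact: measurableT_comp mw measurable_snd.
  exact: measurableT_comp (measurable_eiint js) mu.
have H0 p : (0 <= H p)%E.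
  by rewrite !mule_ge0 ?lee_fin ?eiint_ge0.
have wZ (t : R) (h : R -> \bar R) : measurable_fun setT h -> (forall u, 0 <= h u)%E ->
    ((w t)%:E * \int[L]_u h u = \int[L]_u ((w t)%:E * h u))%E.
  by move=> mh h0; rewrite ge0_integralZl ?lee_fin.
transitivity (\int[L]_t \int[L]_u H (t, u))%E.
  apply: eq_integral => t _; rewrite wZ //.
    by apply: emeasurable_funM; [exact/measurable_EFinP | exact: measurable_eiint_upd].
  by move=> u; rewrite mule_ge0 ?lee_fin ?eiint_ge0.
rewrite (@fubini_tonelli _ _ _ _ _ L L H mH H0); apply: eq_integral => u _; rewrite wZ //.
- by apply: eq_integral => t _; rewrite /H /= updC // muleCA.
- by apply: emeasurable_funM; [exact/measurable_EFinP | exact: measurable_eiint_upd].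
- by move=> t; rewrite mule_ge0 ?lee_fin ?eiint_ge0.
Qed.

Lemma eiint_cat_cons i js1 js2 s : i \notin js1 ->
  eiint g (js1 ++ i :: js2) s = eiint g (i :: js1 ++ js2) s.
Proof.
elim: js1 s => [//|j js1 IH] s /=; rewrite inE negb_or => /andP[ij ijs].
transitivity (eiint g [:: j, i & js1 ++ js2] s).
  by apply: eq_integral => t _; rewrite IH.
by rewrite eiint_swap // eq_sym.
Qed.

Lemma eiint_enum i s : eiint g (enum 'I_n) s = eiint g (i :: others i) s.
Proof.
rewrite /others; have := enum_uniq 'I_n.
have /splitPr[p1 p2] : i \in enum 'I_n by rewrite mem_enum.
rewrite cat_uniq /= negb_or => /and4P[_ /andP[ip1 _] ip2 _].
rewrite eiint_cat_cons // filter_cat /= eqxx /=.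
by rewrite !(all_filterP _) ?all_predC ?has_pred1.
Qed.

End Mechanism.
End IteratedIntegral.

Record density (R : realType) (lo hi : R) (w : R -> R) : Prop := Density {
  density_measurable : measurable_fun setT w;
  density_ge0 : forall t, 0 <= w t;
  density_integral : (\int[L]_t (w t)%:E = 1)%E;
  density_support : forall t, ~ (lo <= t <= hi) -> w t = 0 }.

Lemma signal_structure_density (R : realType) (lo hi : R) gp gm :
  signal_structure lo hi gp gm -> density lo hi gp /\ density lo hi gm.
Proof.
case=> _ [mgp mgm [gp0 gm0] gp1 gm1] _ [_ [fout _]] _.
have out t : ~ (lo <= t <= hi) -> gp t = 0 /\ gm t = 0.
  by move=> /fout; rewrite /dens_f => f0; have := gp0 t; have := gm0 t; lra.
by split; split=> // t /out[].
Qed.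

Lemma signal_structure_gp_gt0 (R : realType) (lo hi : R) gp gm t :
  signal_structure lo hi gp gm -> lo < t < hi -> 0 < gp t.
Proof.
case=> -[lo0 _] _ _ [fpos [_ norm]] _ tin.
have /andP[lot thi] := tin; have := fpos t tin; rewrite /dens_f => f0.
by rewrite norm ?ltW // mulr_gt0 //; lra.
Qed.

Lemma fin_num_itv01 (R : realType) (e : \bar R) : (0 <= e <= 1)%E -> e \is a fin_num.
Proof. by case/andP => e0 e1; rewrite ge0_fin_numE // (le_lt_trans e1 (ltry 1)). Qed.

Section ConditionalAllocation.
Variables (R : realType) (n : nat) (lo hi : R) (w : R -> R).
Hypothesis hw : density lo hi w.
Let mw := density_measurable hw.
Let w0 := density_ge0 hw.
Let w1 := density_integral hw.

Lemma density_integral_itv01 (f : R -> R) : measurable_fun setT f ->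
  (forall t, 0 <= f t <= 1) -> (0 <= \int[L]_t (w t * f t)%:E <= 1)%E.
Proof.
move=> mf f01; have wf0 t : 0 <= w t * f t by rewrite mulr_ge0 //; case/andP: (f01 t).
rewrite integral_ge0 => [|t _]; last by rewrite lee_fin.
rewrite -w1; apply: ge0_le_integral => //.
- by move=> t _; rewrite lee_fin.
- exact/measurable_EFinP/measurable_funM.
- exact/measurable_EFinP.
- by move=> t _; rewrite lee_fin ler_piMr //; case/andP: (f01 t).
Qed.

Variables (i : 'I_n) (g : n.-tuple R -> R).
Hypothesis mg : mechanism g.

Lemma iint_eiint js s : iint lo hi w g js s = fine (eiint w g js s).
Proof.
elim: js s => [//|j js IH] s /=.
rewrite /Rintegral integral_mkcond; congr fine; apply: eq_integral => t _.
rewrite /patch; case: ifPn => [_|tin].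
  by rewrite IH EFinM fineK // fin_num_itv01 // eiint_ge0 ?eiint_le1.
rewrite (density_support hw) ?mul0e // => /andP ht; move/negP: tin; apply.
by rewrite inE /= in_itv /=; apply/andP.
Qed.

Lemma condE_eiint t : (condE lo hi w g i t)%:E = eiint w g (others i) [tuple t | _ < n].
Proof.
by rewrite /condE iint_eiint fineK // fin_num_itv01 // eiint_ge0 ?eiint_le1.
Qed.

Lemma condE_itv01 t : 0 <= condE lo hi w g i t <= 1.
Proof. by rewrite -!lee_fin condE_eiint eiint_ge0 ?eiint_le1. Qed.

Lemma measurable_condE : measurable_fun setT (condE lo hi w g i).
Proof.
apply/measurable_EFinP.
rewrite (_ : EFin \o _ = fun t => eiint w g (others i) [tuple t | _ < n]).
  exact: measurableT_comp (measurable_eiint mw w0 w1 mg _) (@measurable_diag_tuple R n).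
by apply: funext => t /=; rewrite condE_eiint.
Qed.

Lemma iint_enum_condE z : iint lo hi w g (enum 'I_n) z =
  fine (\int[L]_t (w t * condE lo hi w g i t)%:E).
Proof.
rewrite iint_eiint (eiint_enum mw w0 w1 mg i) /=.
congr fine; apply: eq_integral => t _; rewrite EFinM condE_eiint; congr (_ * _)%E.
apply: eiint_dep => k; rewrite mem_filter mem_enum andbT negbK => /eqP ->.
by rewrite tnth_upd eqxx tnth_mktuple.
Qed.

End ConditionalAllocation.

Lemma integral_gt0_itv (R : realType) (f : R -> R) (a b : R) :
  measurable_fun setT f -> (forall t, 0 <= f t) -> a < b ->
  (forall t, a < t < b -> 0 < f t) -> (0 < \int[L]_t (f t)%:E)%E.
Proof.
move=> mf f0 ab fp; have mI : measurable (`]a, b[ : set R) by exact: measurable_itv.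
have mfE : measurable_fun setT (EFin \o f) by exact/measurable_EFinP.
apply: (@lt_le_trans _ _ (\int[L]_(t in `]a, b[) (f t)%:E)%E); last first.
  by apply: ge0_subset_integral => // t _; rewrite lee_fin.
rewrite lt0e integral_ge0 ?andbT => [|t _]; last by rewrite lee_fin.
apply/eqP => If0.
have [N [mN N0 fN]] : ae_eq L `]a, b[ (EFin \o f) (cst 0%E).
  apply/ae_eq_integral_abs => //; first exact: measurable_funS mfE.
  by rewrite -If0; apply: eq_integral => t _; rewrite gee0_abs ?lee_fin.
have : (L `]a, b[ <= L N)%E.
  apply: le_measure; rewrite ?inE //= => t tab; apply: fN => /(_ tab) /= [].
  by move: tab; rewrite /= in_itv /= => /fp /gt_eqF /eqP.
by rewrite N0 lebesgue_measure_itv /= lte_fin ab lee_fin subr_le0 leNgt ab.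
Qed.

Lemma own_allocation_lt1 (R : realFieldType) (s0 t a b u0 : R) :
  0 <= a <= 1 -> 0 <= b <= 1 -> t <= 1 -> u0 < 2 * s0 - 1 ->
  s0 * a - (1 - s0) * b <= u0 -> s0 - (2 * s0 - 1 - u0) / 4 < t ->
  t * a - (1 - t) * b < 2 * t - 1 /\ a < 1.
Proof.
move=> /andP[a0 a1] /andP[b0 b1] t1 u0s0 ic near.
have margin : t * a - (1 - t) * b <= 2 * t - 1 - (2 * s0 - 1 - u0) / 2.
  have -> : t * a - (1 - t) * b = s0 * a - (1 - s0) * b + (t - s0) * (a + b).
    by ring.
  have [ts0|s0t] := leP s0 t.
    have : (t - s0) * (a + b) <= (t - s0) * 2 by rewrite ler_wpM2l; lra.
    lra.
  have : (t - s0) * (a + b) <= 0 by rewrite nmulr_rle0; lra.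
  lra.
split; first lra.
have tb0 : 0 <= (1 - t) * (1 - b) by apply: mulr_ge0; lra.
have [a_eq1|] := eqVneq a 1; last by rewrite lt_neqAle a1 andbT.
by rewrite a_eq1 in margin; nra.
Qed.

Section Raise.
Variables (R : realType) (n : nat) (i : 'I_n) (S : R -> bool).
Hypothesis mS : measurable_fun setT S.

Definition raise (x : n.-tuple R -> R) (s : n.-tuple R) : R :=
  if S (tnth s i) then 1 else x s.

Variable x : n.-tuple R -> R.
Hypothesis mx : mechanism x.

Lemma mechanism_raise : mechanism (raise x).
Proof.
case: mx => mx01 x01; split=> [|s]; last by rewrite /raise; case: ifP; rewrite ?ler01 ?lexx.
exact: measurable_fun_ifT (measurableT_comp mS (measurable_tnth i)) _ mx01.
Qed.

Variables (lo hi : R) (w : R -> R).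
Hypothesis hw : density lo hi w.

Lemma condE_raise t :
  condE lo hi w (raise x) i t = if S t then 1 else condE lo hi w x i t.
Proof.
have noti : i \notin others i by rewrite mem_filter eqxx.
have ti : tnth [tuple t | _ < n] i = t by rewrite tnth_mktuple.
apply: EFin_inj; rewrite (condE_eiint hw _ mechanism_raise); case: ifPn => St.
  rewrite (eq_eiint_slice w (h := fun _ => 1) _ noti ti).
    by apply: eiint_cst1; exact: density_integral hw.
  by move=> s sit; rewrite /raise sit St.
rewrite (condE_eiint hw _ mx); apply: (eq_eiint_slice w _ noti ti).
by move=> s sit; rewrite /raise sit (negbTE St).
Qed.

Lemma iint_raise z : iint lo hi w (raise x) (enum 'I_n) z =
  iint lo hi w x (enum 'I_n) z +
  fine (\int[L]_t (w t * (if S t then 1 - condE lo hi w x i t else 0))%:E).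
Proof.
have [A01 mA] := (condE_itv01 hw i mx, measurable_condE hw i mx).
have mB : measurable_fun setT (fun t => if S t then 1 - condE lo hi w x i t else 0).
  exact: measurable_fun_ifT (measurable_funB _ mA) _.
have B01 t : 0 <= (if S t then 1 - condE lo hi w x i t else 0) <= 1.
  by case: ifP => _; [have := A01 t; lra | rewrite lexx ler01].
rewrite (iint_enum_condE hw i mechanism_raise) (iint_enum_condE hw i mx) -fineD;
  last 2 first.
- exact/fin_num_itv01/(density_integral_itv01 hw mA).
- exact/fin_num_itv01/(density_integral_itv01 hw mB).
rewrite -ge0_integralD //.
- congr fine; apply: eq_integral => t _; rewrite condE_raise -EFinD -mulrDr.
  by case: ifP => _; rewrite ?subrKC ?addr0.
- by move=> t _; rewrite lee_fin mulr_ge0 ?(density_ge0 hw) //; case/andP: (A01 t).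
- by apply/measurable_EFinP; exact: measurable_funM (density_measurable hw) mA.
- by move=> t _; rewrite lee_fin mulr_ge0 ?(density_ge0 hw) //; case/andP: (B01 t).
- by apply/measurable_EFinP; exact: measurable_funM (density_measurable hw) mB.
Qed.

End Raise.

Section OptimalMechanism.
Variables (R : realType) (n : nat) (i : 'I_n) (lo hi : R) (gp gm : R -> R).
Hypothesis hsig : signal_structure lo hi gp gm.
Let hgp := (signal_structure_density hsig).1.
Let hgm := (signal_structure_density hsig).2.

Variable x : n.-tuple R -> R.
Hypothesis mx : mechanism x.

Definition prefers_full_allocation (t : R) : bool :=
  indirect_utility lo hi gp gm x i t < 2 * t - 1.

Lemma measurable_prefers_full_allocation : measurable_fun setT prefers_full_allocation.
Proof.
apply: measurable_fun_ltr; last by apply: measurable_funB => //; exact: measurable_funM.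
apply: measurable_funB; apply: measurable_funM => //.
- exact: measurable_condE.
- exact: measurable_funB.
- exact: measurable_condE.
Qed.

Let y := raise i prefers_full_allocation x.

Lemma interim_raise s r : interim lo hi gp gm y i s r =
  if prefers_full_allocation r then 2 * s - 1 else interim lo hi gp gm x i s r.
Proof.
rewrite /interim !(condE_raise i measurable_prefers_full_allocation mx) //.
by case: ifP => _ //; ring.
Qed.

Lemma feasible_raise : feasible lo hi gp gm x i -> feasible lo hi gp gm y i.
Proof.
case=> _ Px ICx; split.
- exact: (mechanism_raise i measurable_prefers_full_allocation mx).
- move=> s hs; rewrite interim_raise; case: ifPn => [sS|_]; last exact: Px.
  by move: sS; rewrite /prefers_full_allocation /indirect_utility; have := Px s hs; lra.
move=> s r hs hr; rewrite !interim_raise.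
case: ifPn => rS; case: ifPn => sS //; rewrite /prefers_full_allocation in sS.
- by rewrite leNgt.
- exact: le_trans (ICx s r hs hr) (ltW sS).
- exact: ICx.
Qed.

Lemma objective_lt_raise s0 : incentive_compatible lo hi gp gm x i ->
  lo <= s0 <= hi -> prefers_full_allocation s0 ->
  objective lo hi gp gm x < objective lo hi gp gm y.
Proof.
move=> ICx hs0 s0S.
have [[lo0 [lohi hi1]] _ _ _ _] := hsig.
set A := condE lo hi gp x i; set B := condE lo hi gm x i.
have [A01 B01] := (condE_itv01 hgp i mx, condE_itv01 hgm i mx).
set Dp := (\int[L]_t (gp t * (if prefers_full_allocation t then 1 - A t else 0))%:E)%E.
set Dm := (\int[L]_t (gm t * (if prefers_full_allocation t then 1 - B t else 0))%:E)%E.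
rewrite /objective /y !(iint_raise i measurable_prefers_full_allocation mx) // -/Dp -/Dm.
suff [Dp_gt0 Dm_ge0] : 0 < fine Dp /\ 0 <= fine Dm by lra.
have raise_gain01 (C : R -> R) : (forall t, 0 <= C t <= 1) ->
    forall t, 0 <= (if prefers_full_allocation t then 1 - C t else 0) <= 1.
  by move=> C01 t; case: ifP => _; [have := C01 t; lra | rewrite lexx ler01].
have gain_ge0 (w C : R -> R) : density lo hi w -> (forall t, 0 <= C t <= 1) ->
    forall t, 0 <= w t * (if prefers_full_allocation t then 1 - C t else 0).
  move=> hw C01 t; rewrite mulr_ge0 ?(density_ge0 hw) //.
  by case/andP: (raise_gain01 _ C01 t).
split; last first.
  apply: fine_ge0; apply: integral_ge0 => t _.
  by rewrite lee_fin; exact: (gain_ge0 _ _ hgm B01 t).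
have mA := measurable_condE hgp i mx.
have mgain : measurable_fun setT
    (fun t => if prefers_full_allocation t then 1 - A t else 0).
  exact: measurable_fun_ifT measurable_prefers_full_allocation (measurable_funB _ mA) _.
have /andP[_ Dp_le1] := density_integral_itv01 hgp mgain (raise_gain01 _ A01).
apply: fine_gt0; rewrite (le_lt_trans Dp_le1 (ltry 1)) andbT.
set d := 2 * s0 - 1 - indirect_utility lo hi gp gm x i s0.
apply: (@integral_gt0_itv _ _ (Num.max lo (s0 - d / 4)) hi).
- exact: measurable_funM (density_measurable hgp) mgain.
- exact: gain_ge0 hgp A01.
- have d_gt0 : 0 < d by move: s0S; rewrite /prefers_full_allocation /d; lra.
  by rewrite gt_max lohi /=; case/andP: hs0 => _ s0hi; lra.
move=> t /andP[]; rewrite gt_max => /andP[lot s0t] thi.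
have tin : lo <= t <= hi by rewrite !ltW.
have [tS At1] := own_allocation_lt1 (A01 t) (B01 t) (le_trans (ltW thi) hi1) s0S
  (ICx s0 t hs0 tin) s0t.
rewrite /prefers_full_allocation /indirect_utility /interim -/A -/B tS.
by rewrite mulr_gt0 ?subr_gt0 // (signal_structure_gp_gt0 hsig) ?lot.
Qed.

End OptimalMechanism.

Theorem lemmaA3 (R : realType) (n : nat) (hn : (2 <= n)%N) (i : 'I_n)
    (lo hi : R) (gp gm : R -> R)
    (hsig : signal_structure lo hi gp gm)
    (x : n.-tuple R -> R)
    (hopt : optimal lo hi gp gm x i) :
  forall s : R, lo <= s <= hi ->
    2 * s - 1 <= indirect_utility lo hi gp gm x i s.
Proof.
move=> s hs; case: hopt => feas opt; have [mx _ ICx] := feas.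
rewrite leNgt; apply/negP => s_prefers.
have := opt _ (feasible_raise hsig mx feas).
by rewrite leNgt (objective_lt_raise hsig mx ICx hs s_prefers).
Qed.
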